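(* Let $\mathscr{F}$ be a family of languages closed under product, union, Kleene closure and (left and right) division by finite [respectively, regular] languages. Let $S$ be a semigroup, let $\sigma : X^+ \to S$ be a choice of generators for $S$, and suppose that $L_\sigma(S) \in \mathscr{F}$. If $T$ is a finite [respectively, rational] ideal of $S$, then $L_{\sigma/T}(S/T) \in \mathscr{F}$.
   Context: For a semigroup $S$, $S^1$ denotes the monoid obtained by adjoining a new identity $1$ (even if $S$ already has one). A choice of generators for $S$ is a surjective morphism $\sigma : X^+ \to S$ from a free semigroup; it extends uniquely to $\sigma^1 : X^* \to S^1$. Let $\overline{X} = \{\overline{x} : x \in X\}$ be a set of formal inverses, $\hat{X} = X \cup \overline{X}$, with the involution $\overline{\overline{x}} = x$ and $\overline{x_1\cdots x_n} = \overline{x_n}\cdots\overline{x_1}$. The loop automaton of $S$ with respect to $\sigma$ is the directed labelled graph with vertex set $S^1$, having for each $a \in S^1$ and $x \in X$ an edge from $a$ to $a(x\sigma)$ labelled $x$ and an edge from $a(x\sigma)$ to $a$ labelled $\overline{x}$. The loop problem $L_\sigma(S) \subseteq \hat{X}^*$ is the set of words labelling paths from $1$ to $1$ in this graph (including the empty word). An ideal of $S$ is a subsemigroup $T$ with $S T \cup T S \subseteq T$. The Rees quotient $S/T$ has elements $(S\setminus T) \cup \{0\}$, with product equal to the $S$-product when that product lies outside $T$ and both factors are nonzero, and $0$ otherwise. The map $S \to S/T$ sending $s \notin T$ to $s$ and $s \in T$ to $0$ is a surjective morphism; composing $\sigma$ with it gives a choice of generators $\sigma/T : X^+ \to S/T$.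 A subset of $S$ is rational if it is the image of a regular language under a morphism from a finitely generated free monoid to $S$; a rational ideal is a rational subset which is an ideal. For languages $L, K$, division means $L K^{-1} = \{w : wk \in L \text{ for some } k \in K\}$ and $K^{-1}L = \{w : kw \in L \text{ for some } k \in K\}$. *)

From Stdlib Require Import ClassicalEpsilon.
From Stdlib Require List.
From mathcomp Require Import all_boot.

Set Implicit Arguments.
Unset Strict Implicit.
Unset Printing Implicit Defensive.

Definition lang (A : Type) := seq A -> Prop.

Section Languages.
Variable A : Type.

Definition lang_cat (L1 L2 : lang A) : lang A :=
  fun w => exists u v, w = u ++ v /\ L1 u /\ L2 v.

Definition lang_union (L1 L2 : lang A) : lang A := fun w => L1 w \/ L2 w.

Inductive lang_star (L : lang A) : lang A :=
| star_nil : lang_star L [::]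
| star_cons u v : L u -> lang_star L v -> lang_star L (u ++ v).

Definition lang_rdiv (L K : lang A) : lang A := fun w => exists k, K k /\ L (w ++ k).
Definition lang_ldiv (K L : lang A) : lang A := fun w => exists k, K k /\ L (k ++ w).

Definition finite_lang (K : lang A) : Prop :=
  exists s : seq (seq A), forall w, K w <-> List.In w s.

Inductive regex : Type :=
| Rempty | Reps | Rchar of A | Rplus of regex & regex
| Rcat of regex & regex | Rstar of regex.

Fixpoint regex_lang (r : regex) : lang A :=
  match r with
  | Rempty => fun _ => False
  | Reps => fun w => w = [::]
  | Rchar a => fun w => w = [:: a]
  | Rplus r1 r2 => lang_union (regex_lang r1) (regex_lang r2)
  | Rcat r1 r2 => lang_cat (regex_lang r1) (regex_lang r2)
  | Rstar r1 => lang_star (regex_lang r1)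
  end.

Definition regular (K : lang A) : Prop := exists r, forall w, K w <-> regex_lang r w.
End Languages.

Definition lang_family := forall A : finType, lang A -> Prop.

Definition closed_rat_ops (F : lang_family) : Prop :=
  forall A : finType,
    (forall L1 L2, F A L1 -> F A L2 -> F A (lang_cat L1 L2)) /\
    (forall L1 L2, F A L1 -> F A L2 -> F A (lang_union L1 L2)) /\
    (forall L, F A L -> F A (lang_star L)).

Definition closed_div (P : forall A : finType, lang A -> Prop) (F : lang_family) : Prop :=
  forall (A : finType) (K L : lang A), P A K -> F A L ->
    F A (lang_rdiv L K) /\ F A (lang_ldiv K L).

Section Semigroup.
Variables (S : Type) (mul : S -> S -> S).

(* value of the nonempty word x w under the morphism X^+ -> S determined by g *)
Definition eval_word (X : Type) (g : X -> S) (x : X) (w : seq X) : S :=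
  foldl (fun s y => mul s (g y)) (g x) w.

(* g : X -> S determines a choice of generators sigma : X^+ -> S (surjective) *)
Definition is_generating (X : Type) (g : X -> S) : Prop :=
  forall s, exists x w, eval_word g x w = s.

(* S^1 = option S, with None the adjoined identity; right multiplication by s in S *)
Definition one_mul (a : option S) (s : S) : option S :=
  match a with None => Some s | Some b => Some (mul b s) end.

(* hat X = X + X : inl x is x, inr x is the formal inverse xbar *)
Definition loop_edge (X : Type) (g : X -> S) (a : option S) (y : X + X) (b : option S) : Prop :=
  match y with
  | inl x => b = one_mul a (g x)
  | inr x => a = one_mul b (g x)
  end.

Fixpoint loop_path (X : Type) (g : X -> S) (a : option S) (w : seq (X + X)) (b : option S)
  : Prop :=
  match w with
  | [::] => a = b
  | y :: w' => exists c, loop_edge g a y c /\ loop_path g c w' b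
  end.

Definition loop_problem (X : Type) (g : X -> S) : lang (X + X) :=
  fun w => loop_path g None w None.

Definition is_ideal (T : S -> Prop) : Prop :=
  (exists t, T t) /\ (forall s t, T t -> T (mul s t) /\ T (mul t s)).

Definition finite_subset (T : S -> Prop) : Prop :=
  exists l : seq S, forall s, T s <-> List.In s l.

Definition rational_subset (R : S -> Prop) : Prop :=
  exists (Y : finType) (f : Y -> S) (K : lang Y),
    regular K /\ forall s, R s <-> exists y w, K (y :: w) /\ eval_word f y w = s.

(** Rees quotient S/T : None is 0, Some s with s \notin T *)
Definition rees (T : S -> Prop) := option {s : S | ~ T s}.

Definition rees_proj (T : S -> Prop) (s : S) : rees T :=
  match excluded_middle_informative (T s) with
  | left _ => None
  | right h => Some (exist _ s h)
  end.

Definition rees_mul (T : S -> Prop) (a b : rees T) : rees T :=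
  match a, b with
  | Some a', Some b' => rees_proj T (mul (proj1_sig a') (proj1_sig b'))
  | _, _ => None
  end.

Definition rees_gen (T : S -> Prop) (X : Type) (g : X -> S) : X -> rees T :=
  fun x => rees_proj T (g x).
End Semigroup.

From mathcomp Require Import all_boot.
From Stdlib Require Import ProofIrrelevance ClassicalEpsilon.
From Stdlib Require Import FunctionalExtensionality PropExtensionality.

Set Implicit Arguments.
Unset Strict Implicit.
Unset Printing Implicit Defensive.

(** Walks in the loop automaton of [S/T] lift to walks in that of [S] which,
    whenever they sit in [T] (the zero of [S/T]), may jump to any other element
    of [T].  Cutting a lifted loop at its jumps gives
      [L_{sigma/T}(S/T) = L + (L Kbar^-1) (K^-1 L Kbar^-1)^* (K^-1 L)],
    where [L = L_sigma(S)] and [K] is a language of generator words whose values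
    are exactly the elements of [T]: [L Kbar^-1] and [K^-1 L] are the walks from
    [1] into [T] and from [T] back to [1].  One word per element makes [K] finite
    when [T] is finite; when [T] is rational, substituting words for the letters
    of a regular language describing [T] makes [K] regular. *)

Lemma lang_ext (A : Type) (K1 K2 : lang A) : (forall w, K1 w <-> K2 w) -> K1 = K2.
Proof.
by move=> eqK; apply: functional_extensionality => w; apply: propositional_extensionality.
Qed.

Definition lang_image (A B : Type) (f : seq A -> seq B) (K : lang A) : lang B :=
  fun w => exists2 u, K u & w = f u.

Lemma lang_image_comp (A B C : Type) (f : seq B -> seq C) (h : seq A -> seq B) (K : lang A) :
  lang_image f (lang_image h K) = lang_image (f \o h) K.
Proof.
apply: lang_ext => w; split=> [[_ [u Ku ->] ->]|[u Ku ->]]; first by exists u.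
by exists (h u) => //; exists u.
Qed.

Lemma finite_lang_image (A B : Type) (f : seq A -> seq B) (K : lang A) :
  finite_lang K -> finite_lang (lang_image f K).
Proof.
case=> s Ks; exists (List.map f s) => w; rewrite List.in_map_iff.
by split=> [[u /Ks Ku ->]|[u [<- /Ks Ku]]]; exists u.
Qed.

Section Star.
Variable A : Type.
Implicit Types L : lang A.

Lemma star_cat L u v : lang_star L u -> lang_star L v -> lang_star L (u ++ v).
Proof.
by elim=> [//|u1 v1 Lu1 _ IH] Lv; rewrite -catA; apply: star_cons (IH Lv).
Qed.

Lemma star_mono L1 L2 w : (forall u, L1 u -> L2 u) -> lang_star L1 w -> lang_star L2 w.
Proof. by move=> sub12; elim=> [|u v /sub12 L2u _ IH]; [apply: star_nil | apply: star_cons]. Qed.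

Lemma star_rev L w : lang_star L w -> lang_star (fun u => L (rev u)) (rev w).
Proof.
elim=> [|u v Lu _ IH]; first exact: star_nil.
rewrite rev_cat; apply: star_cat IH _; rewrite -[rev u]cats0.
by apply: star_cons (star_nil _); rewrite revK.
Qed.

End Star.

Section Regular.
Variables A B : Type.

Fixpoint nullable (r : regex A) : bool :=
  match r with
  | Rempty | Rchar _ => false
  | Reps | Rstar _ => true
  | Rplus r1 r2 => nullable r1 || nullable r2
  | Rcat r1 r2 => nullable r1 && nullable r2
  end.

Lemma nullableP r : nullable r <-> regex_lang r [::].
Proof.
elim: r => [||a|r1 IH1 r2 IH2|r1 IH1 r2 IH2|r IH] /=; try by split.
- split; first by case/orP => [/IH1|/IH2]; [left|right].
  by case=> [/IH1|/IH2] ->; rewrite ?orbT.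
- split; first by case/andP => /IH1 ? /IH2 ?; exists [::], [::].
  by case=> [[|a u] [[|b v] [//= _ [/IH1 -> /IH2 ->]]]].
- by split=> _; first exact: star_nil.
Qed.

Fixpoint regex_nonempty (r : regex A) : regex A :=
  match r with
  | Rempty | Reps => Rempty _
  | Rchar a => Rchar a
  | Rplus r1 r2 => Rplus (regex_nonempty r1) (regex_nonempty r2)
  | Rcat r1 r2 =>
      Rplus (Rcat (regex_nonempty r1) r2) (if nullable r1 then regex_nonempty r2 else Rempty _)
  | Rstar r => Rcat (regex_nonempty r) (Rstar r)
  end.

Lemma regex_nonemptyP r w : regex_lang (regex_nonempty r) w <-> regex_lang r w /\ w <> [::].
Proof.
elim: r w => [||a|r1 IH1 r2 IH2|r1 IH1 r2 IH2|r IH] w /=.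
- by split=> [[]|[]].
- by split=> [[]|[->]].
- by split=> [->|[]].
- rewrite /lang_union IH1 IH2; tauto.
- split.
  + case=> [[u [v [-> [/IH1 [r1u u_ne] r2v]]]]|].
      by split; [exists u, v | case: u u_ne {r1u}].
    case r1nil: (nullable r1) => //= /IH2 [r2w w_ne].
    by split=> //; exists [::], w; split=> //; split=> //; apply/nullableP.
  + case=> [[[|a u] [v [-> [r1u r2v]]]] w_ne].
      by right; have /nullableP -> := r1u; apply/IH2.
    by left; exists (a :: u), v; split=> //; split=> //; apply/IH1.
- split.
  + case=> [u [v [-> [/IH [r1u u_ne] r1v]]]].
    by split; [apply: star_cons | case: u u_ne {r1u}].
  + case; elim=> [//|[|a u] v r1u r1v IHv] w_ne; first exact: IHv.
    by exists (a :: u), v; split=> //; split=> //; apply/IH.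
Qed.

Lemma regular_nonempty (K : lang A) : regular K -> regular (fun w => K w /\ w <> [::]).
Proof. by case=> r Kr; exists (regex_nonempty r) => w; rewrite regex_nonemptyP Kr. Qed.

Definition regex_word (s : seq B) : regex B := foldr (fun b r => Rcat (Rchar b) r) (Reps _) s.

Lemma regex_wordP s w : regex_lang (regex_word s) w <-> w = s.
Proof.
elim: s w => [//|b s IH] w /=; split; first by case=> [u [v [-> [-> /IH ->]]]].
by move=> ->; exists [:: b], s; split=> //; split=> //; apply/IH.
Qed.

Fixpoint regex_hom (h : A -> seq B) (r : regex A) : regex B :=
  match r with
  | Rempty => Rempty _
  | Reps => Reps _
  | Rchar a => regex_word (h a)
  | Rplus r1 r2 => Rplus (regex_hom h r1) (regex_hom h r2)
  | Rcat r1 r2 => Rcat (regex_hom h r1) (regex_hom h r2)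
  | Rstar r => Rstar (regex_hom h r)
  end.

Lemma regex_homP h r :
  regex_lang (regex_hom h r) = lang_image (fun u => flatten (map h u)) (regex_lang r).
Proof.
apply: lang_ext; elim: r => [||a|r1 IH1 r2 IH2|r1 IH1 r2 IH2|r IH] w /=.
- by split=> [[]|[]].
- by split=> [->|[_ -> ->]]; first by exists [::].
- rewrite regex_wordP; split=> [->|[_ -> ->]]; last by rewrite /= cats0.
  by exists [:: a]; rewrite /= ?cats0.
- rewrite /lang_union IH1 IH2; split; first by case=> [[u ? ->]|[u ? ->]]; exists u; auto.
  by case=> u [?|?] ->; [left|right]; exists u.
- split.
  + case=> [_ [_ [-> [/IH1 [u1 r1u1 ->] /IH2 [u2 r2u2 ->]]]]].
    by exists (u1 ++ u2); [exists u1, u2 | rewrite map_cat flatten_cat].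
  + case=> _ [u1 [u2 [-> [r1u1 r2u2]]]] ->; rewrite map_cat flatten_cat.
    by exists (flatten (map h u1)), (flatten (map h u2)); split=> //; split;
      [apply/IH1; exists u1 | apply/IH2; exists u2].
- split.
  + elim=> [|_ v /IH [u1 ru1 ->] _ [u2 ru2 ->]]; first by exists [::]; first exact: star_nil.
    by exists (u1 ++ u2); [apply: star_cons | rewrite map_cat flatten_cat].
  + case=> u ru ->; elim: ru => [|u1 u2 ru1 _ IHu2]; first exact: star_nil.
    by rewrite map_cat flatten_cat; apply: star_cons IHu2; apply/IH; exists u1.
Qed.

Lemma regular_hom (h : A -> seq B) (K : lang A) :
  regular K -> regular (lang_image (fun u => flatten (map h u)) K).
Proof.
case=> r Kr; exists (regex_hom h r) => w.
by rewrite regex_homP (lang_ext Kr).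
Qed.

Lemma regular_map (f : A -> B) (K : lang A) : regular K -> regular (lang_image (map f) K).
Proof.
have -> : map f = fun u => flatten (map (fun a => [:: f a]) u).
  by apply: functional_extensionality => u; rewrite flatten_map1.
exact: regular_hom.
Qed.

Fixpoint regex_rev (r : regex A) : regex A :=
  match r with
  | Rplus r1 r2 => Rplus (regex_rev r1) (regex_rev r2)
  | Rcat r1 r2 => Rcat (regex_rev r2) (regex_rev r1)
  | Rstar r => Rstar (regex_rev r)
  | r => r
  end.

Lemma regex_revP r w : regex_lang (regex_rev r) w <-> regex_lang r (rev w).
Proof.
elim: r w => [||a|r1 IH1 r2 IH2|r1 IH1 r2 IH2|r IH] w /=.
- by [].
- by split=> [->//|/(congr1 rev)]; rewrite revK.
- by split=> [->//|/(congr1 rev)]; rewrite revK.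
- by rewrite /lang_union IH1 IH2.
- split.
  + by case=> [u [v [-> [/IH2 r2u /IH1 r1v]]]]; exists (rev v), (rev u); rewrite rev_cat.
  + case=> [u [v [e [r1u r2v]]]]; exists (rev v), (rev u).
    by rewrite -rev_cat -e revK; split=> //; split; [apply/IH2 | apply/IH1]; rewrite revK.
- have -> : regex_lang (regex_rev r) = fun u => regex_lang r (rev u) by apply: lang_ext.
  split; last by move/star_rev; rewrite revK.
  by move/star_rev; apply: star_mono => u; rewrite revK.
Qed.

Lemma regular_rev (K : lang A) : regular K -> regular (lang_image rev K).
Proof.
case=> r Kr; exists (regex_rev r) => w; rewrite regex_revP -Kr.
by split=> [[u Ku ->]|Krw]; [rewrite revK | exists (rev w); rewrite ?revK].
Qed.

End Regular.

Section LoopAutomaton.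
Variables (S : Type) (mul : S -> S -> S) (X : Type) (g : X -> S).

Definition act1 (a : option S) (x : X) : option S := one_mul mul a (g x).

Definition eval1 (u : seq X) : option S := foldl act1 None u.

Lemma eval1_cons x v : eval1 (x :: v) = Some (eval_word mul g x v).
Proof. by rewrite /eval1 /eval_word /=; elim: v (g x) => //= y v IH s; rewrite IH. Qed.

Lemma generating_words :
  is_generating mul g -> exists word : S -> seq X, forall s, eval1 (word s) = Some s.
Proof.
move=> gen; apply: (choice (fun s u => eval1 u = Some s)) => s.
by have [x [v <-]] := gen s; exists (x :: v); apply: eval1_cons.
Qed.

Definition path_lang (A B : option S -> Prop) : lang (X + X) :=
  fun w => exists a b, [/\ A a, B b & loop_path mul g a w b].

Lemma loop_problemE : loop_problem mul g = path_lang (eq None) (eq None).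
Proof. by apply: lang_ext => w; split=> [|[_ [_ [<- <-]]]]; last by []; exists None, None. Qed.

Lemma loop_path_cat a u v b :
  loop_path mul g a (u ++ v) b <-> exists c, loop_path mul g a u c /\ loop_path mul g c v b.
Proof.
elim: u a => [|y u IH] a /=; first by split=> [|[c [-> //]]]; exists a.
split; first by case=> c [ac /IH [d [cd db]]]; exists d; split=> //; exists c.
by case=> d [[c [ac cd]] db]; exists c; split=> //; apply/IH; exists d.
Qed.

Lemma loop_path_inl a u c : loop_path mul g a (map inl u) c <-> c = foldl act1 a u.
Proof.
elim: u a c => [|x u IH] a c /=; first by split=> ->.
split; first by case=> _ [-> /IH].
by move=> ->; exists (act1 a x); split=> //; apply/IH.
Qed.

Lemma loop_path_inr a u c : loop_path mul g c (rev (map inr u)) a <-> c = foldl act1 a u.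
Proof.
elim/last_ind: u c => [|u x IH] c; first by [].
rewrite map_rcons rev_rcons foldl_rcons.
split; first by case=> _ [-> /IH ->].
by move=> ->; exists (foldl act1 a u); split=> //; apply/IH.
Qed.

Definition mul1 (a b : option S) : option S := if b is Some s then one_mul mul a s else a.

Hypothesis mulA : associative mul.

Lemma foldl_act1 a u : foldl act1 a u = mul1 a (eval1 u).
Proof.
have mul1A b s : mul1 (one_mul mul b s) =1 mul1 b \o mul1 (Some s).
  by case=> [t|] //=; case: b => //= c; rewrite mulA.
rewrite /eval1; elim: u a => [|x u IH] a //=.
by rewrite (IH (Some (g x))) IH mul1A.
Qed.

End LoopAutomaton.

Lemma eval1_flatten (S : Type) (mul : S -> S -> S) (mulA : associative mul)
    (X Y : Type) (g : X -> S) (f : Y -> S) (h : Y -> seq X) :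
  (forall y, eval1 mul g (h y) = Some (f y)) ->
  forall u, eval1 mul g (flatten (map h u)) = eval1 mul f u.
Proof.
move=> hf u; rewrite /eval1; elim: u None => [|y u IH] a //=.
by rewrite foldl_cat [foldl _ a (h y)]foldl_act1 // hf IH.
Qed.

Definition rees_expr (A : Type) (L Kl Kr : lang A) : lang A :=
  lang_union L (lang_cat (lang_rdiv L Kr)
    (lang_cat (lang_star (lang_ldiv Kl (lang_rdiv L Kr))) (lang_ldiv Kl L))).

Lemma closed_rees_expr (F : lang_family) (P : forall A : finType, lang A -> Prop)
    (A : finType) (L Kl Kr : lang A) :
  closed_rat_ops F -> closed_div P F -> F A L -> P A Kl -> P A Kr -> F A (rees_expr L Kl Kr).
Proof.
move=> ratF divF FL PKl PKr; have [catF [unionF starF]] := ratF A.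
have FLr := (divF _ _ _ PKr FL).1.
apply: (unionF _ _ FL); apply: (catF _ _ FLr); apply: catF.
  exact/starF/(divF _ _ _ PKl FLr).2.
exact: (divF _ _ _ PKl FL).2.
Qed.

Section Rees.
Variables (S : Type) (mul : S -> S -> S) (X : Type) (g : X -> S) (T : S -> Prop).

Definition in_ideal1 (a : option S) : Prop := if a is Some t then T t else False.

Local Notation I := in_ideal1.
Local Notation path_lang := (path_lang mul g).

Definition jump_lang (A B : option S -> Prop) : lang (X + X) :=
  lang_union (path_lang A B)
    (lang_cat (path_lang A I) (lang_cat (lang_star (path_lang I I)) (path_lang I B))).

Inductive jump_path : option S -> seq (X + X) -> option S -> Prop :=
| jump_nil a : jump_path a [::] a
| jump_edge a y c w b : loop_edge mul g a y c -> jump_path c w b -> jump_path a (y :: w) b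
| jump_ideal a c w b : I a -> I c -> jump_path c w b -> jump_path a w b.

Lemma loop_path_jump a w b : loop_path mul g a w b -> jump_path a w b.
Proof.
elim: w a => [|y w IH] a /=; first by move->; apply: jump_nil.
by case=> c [ac cwb]; apply: jump_edge ac (IH _ cwb).
Qed.

Lemma jump_path_cat a u c v b : jump_path a u c -> jump_path c v b -> jump_path a (u ++ v) b.
Proof.
elim=> // [{}a y d {}u {}c ad _ IH|{}a d {}u {}c Ia Id _ IH] cvb.
- exact: jump_edge ad (IH cvb).
- exact: jump_ideal Ia Id (IH cvb).
Qed.

Lemma star_jump_path w a b : lang_star (path_lang I I) w -> I a -> I b -> jump_path a w b.
Proof.
move=> starw; elim: starw a => [|u v [c [d [Ic Id cud]]] _ IH] a Ia Ib.
- exact: jump_ideal Ia Ib (jump_nil b).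
- exact: jump_ideal Ia Ic (jump_path_cat (loop_path_jump cud) (IH d Id Ib)).
Qed.

Lemma path_lang_cons B a y c w :
  loop_edge mul g a y c -> path_lang (eq c) B w -> path_lang (eq a) B (y :: w).
Proof. by move=> ac [_ [b [<- Bb cwb]]]; exists a, b; split=> //; exists c. Qed.

Lemma jump_pathE a w b : jump_path a w b <-> jump_lang (eq a) (eq b) w.
Proof.
split.
- elim=> [{}a|{}a y c {}w {}b ac _ IH|{}a c {}w {}b Ia Ic _ IH].
  + by left; exists a, a.
  + case: IH => [cwb|[w1 [w23 [-> [cw1 w23P]]]]].
      by left; apply: path_lang_cons ac cwb.
    by right; exists (y :: w1), w23; split=> //; split=> //; apply: path_lang_cons ac cw1.
  + right; exists [::], w; split=> //; split; first by exists a, a.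
    case: IH => [cwb|[w1 [w23 [-> [[_ [d [<- Id cw1d]]] [w2 [w3 [-> [w2P w3P]]]]]]]]].
      exists [::], w; split=> //; split; first exact: star_nil.
      by case: cwb => _ [b' [<- Bb' cwb]]; exists c, b'.
    exists (w1 ++ w2), w3; rewrite catA; split=> //; split=> //.
    by apply: star_cons w2P; exists c, d.
- case=> [[_ [_ [<- <- awb]]]|[w1 [_ [-> [[_ [c [<- Ic awc]]] [w2 [w3 [-> [w2P dwb]]]]]]]]].
    exact: loop_path_jump.
  case: dwb => d [_ [Id <- dwb]].
  apply: jump_path_cat (loop_path_jump awc) (jump_path_cat (star_jump_path w2P Ic Id) _).
  exact: loop_path_jump.
Qed.

Definition ideal_words (K : lang X) : Prop :=
  forall a, I a <-> exists2 u, K u & eval1 mul g u = a.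

Section Division.
Variable K : lang X.
Hypothesis KI : ideal_words K.

Lemma rdiv_path_lang A :
  lang_rdiv (path_lang A (eq None)) (lang_image (rev \o map inr) K) = path_lang A I.
Proof.
apply: lang_ext => w; split.
- case=> _ [[u Ku ->] [a [_ [Aa <- /loop_path_cat [c [awc /loop_path_inr cE]]]]]].
  by exists a, c; split=> //; apply/KI; exists u.
- case=> a [c [Aa /KI [u Ku <-] awc]]; exists (rev (map inr u)); split; first by exists u.
  exists a, None; split=> //; apply/loop_path_cat; exists (eval1 mul g u).
  by split=> //; apply/loop_path_inr.
Qed.

Lemma ldiv_path_lang B :
  lang_ldiv (lang_image (map inl) K) (path_lang (eq None) B) = path_lang I B.
Proof.
apply: lang_ext => w; split.
- case=> _ [[u Ku ->] [_ [b [<- Bb /loop_path_cat [c [/loop_path_inl cE cwb]]]]]].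
  by exists c, b; split=> //; apply/KI; exists u.
- case=> c [b [/KI [u Ku <-] Bb cwb]]; exists (map inl u); split; first by exists u.
  exists None, b; split=> //; apply/loop_path_cat; exists (eval1 mul g u).
  by split=> //; apply/loop_path_inl.
Qed.

End Division.

Hypothesis idT : is_ideal mul T.

Local Notation mulT := (rees_mul mul (T:=T)).
Local Notation gT := (rees_gen T g).

Definition rees_proj1 : option S -> option (rees T) := omap (rees_proj T).

Lemma rees_proj_zero s : rees_proj T s = None <-> T s.
Proof. by rewrite /rees_proj; case: excluded_middle_informative. Qed.

Lemma rees_proj_Some s p : rees_proj T s = Some p -> proj1_sig p = s.
Proof. by rewrite /rees_proj; case: excluded_middle_informative => // Ts [<-]. Qed.

Lemma rees_proj_val p : rees_proj T (proj1_sig p) = Some p.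
Proof.
rewrite /rees_proj; case: excluded_middle_informative; case: p => s nTs //= Ts.
by rewrite (proof_irrelevance _ Ts nTs).
Qed.

Lemma rees_proj_mul s t : rees_proj T (mul s t) = mulT (rees_proj T s) (rees_proj T t).
Proof.
have [_ Tmul] := idT.
case Es: (rees_proj T s) => [p|].
  case Et: (rees_proj T t) => [q|].
    by rewrite /= (rees_proj_Some Es) (rees_proj_Some Et).
  by move/rees_proj_zero: Et => /(Tmul s) [? _]; apply/rees_proj_zero.
by move/rees_proj_zero: Es => /(Tmul t) [_ ?]; apply/rees_proj_zero.
Qed.

Lemma rees_proj1_one_mul a s :
  rees_proj1 (one_mul mul a s) = one_mul mulT (rees_proj1 a) (rees_proj T s).
Proof. by case: a => //= b; rewrite rees_proj_mul. Qed.

Lemma rees_proj1_ideal a : I a -> rees_proj1 a = Some None.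
Proof. by case: a => //= t /rees_proj_zero ->. Qed.

Lemma rees_proj1_surj c : exists a, rees_proj1 a = c.
Proof.
case: c => [[p|]|]; last by exists None.
- by exists (Some (proj1_sig p)); rewrite /= rees_proj_val.
- by have [[t Tt] _] := idT; exists (Some t); apply: rees_proj1_ideal.
Qed.

Lemma rees_proj1_inj a c : rees_proj1 a = rees_proj1 c -> a = c \/ I a /\ I c.
Proof.
case: a c => [s|] [t|] //=; last by left.
case Et: (rees_proj T t) => [p|] [Es].
- by left; rewrite -(rees_proj_Some Et) -(rees_proj_Some Es).
- by right; split; apply/rees_proj_zero.
Qed.

Lemma jump_path_proj a c w b : rees_proj1 a = rees_proj1 c -> jump_path c w b -> jump_path a w b.
Proof. by case/rees_proj1_inj => [->//|[Ia Ic]]; apply: jump_ideal. Qed.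

Lemma loop_path_rees a w b :
  loop_path mulT gT (rees_proj1 a) w (rees_proj1 b) <-> jump_path a w b.
Proof.
split.
- elim: w a => [|y w IH] a /=; first by move/jump_path_proj; apply; apply: jump_nil.
  case=> c' [ac' cwb]; case: y ac' => x /= ac'.
    by apply: jump_edge (IH _ _) => //; rewrite rees_proj1_one_mul -ac'.
  have [c ec] := rees_proj1_surj c'; subst c'.
  apply: (@jump_path_proj _ (one_mul mul c (g x))); first by rewrite rees_proj1_one_mul.
  exact: jump_edge (IH _ cwb).
- elim=> // [{}a y c {}w {}b ac _ IH|{}a c {}w {}b Ia Ic _].
    by exists (rees_proj1 c); split=> //; case: y ac => x /= ->; rewrite rees_proj1_one_mul.
  by rewrite (rees_proj1_ideal Ia) -(rees_proj1_ideal Ic).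
Qed.

(* [rev (map inr u)] is the formal inverse of the word [u]. *)
Lemma rees_loop_problem_expr K : ideal_words K ->
  loop_problem mulT gT =
  rees_expr (loop_problem mul g) (lang_image (map inl) K) (lang_image (rev \o map inr) K).
Proof.
move=> KI; have -> : loop_problem mulT gT = jump_lang (eq None) (eq None).
  by apply: lang_ext => w; rewrite -jump_pathE -(loop_path_rees None w None).
by rewrite /rees_expr loop_problemE !rdiv_path_lang // !ldiv_path_lang.
Qed.

End Rees.

Section IdealWords.
Variables (S : Type) (mul : S -> S -> S) (X : Type) (g : X -> S) (T : S -> Prop).
Hypothesis gen : is_generating mul g.

Lemma finite_ideal_words : finite_subset T -> exists2 K, ideal_words mul g T K & finite_lang K.
Proof.
case=> l Tl; have [word wordP] := generating_words gen.
exists (fun u => exists2 s, List.In s l & u = word s).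
  move=> a; split=> [|[_ [s ls ->]]]; last by rewrite wordP => <-; apply/Tl.
  by case: a => //= t /Tl lt; exists (word t); [exists t | apply: wordP].
exists (List.map word l) => u; rewrite List.in_map_iff.
by split=> [[s ls ->]|[s [<- ls]]]; exists s.
Qed.

Hypothesis mulA : associative mul.

Lemma rational_ideal_words : rational_subset mul T -> exists2 K, ideal_words mul g T K & regular K.
Proof.
case=> Y [f [KY [regKY Tf]]]; have [word wordP] := generating_words gen.
pose h y := word (f y).
have evalh u : eval1 mul g (flatten (map h u)) = eval1 mul f u.
  by apply: eval1_flatten => // y; apply: wordP.
(* The empty word evaluates to the adjoined identity, which is not in [T]. *)
exists (lang_image (fun u => flatten (map h u)) (fun u => KY u /\ u <> [::])); last first.
  exact/regular_hom/regular_nonempty.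
move=> a; split.
- case: a => //= t /Tf [y [w [KYyw <-]]].
  by exists (flatten (map h (y :: w))); [exists (y :: w) | rewrite evalh eval1_cons].
- case=> _ [[|y w] [KYu u_ne] ->] // <-.
  by rewrite evalh eval1_cons /=; apply/Tf; exists y, w.
Qed.

End IdealWords.

Theorem proposition3p1 (S : Type) (mul : S -> S -> S) (mulA : associative mul)
  (X : finType) (g : X -> S) (gen : is_generating mul g) :
  (forall F : lang_family,
      closed_rat_ops F -> closed_div (@finite_lang) F ->
      F _ (loop_problem mul g) ->
      forall T : S -> Prop, is_ideal mul T -> finite_subset T ->
      F _ (loop_problem (rees_mul mul (T:=T)) (rees_gen T g)))
  /\
  (forall F : lang_family,
      closed_rat_ops F -> closed_div (@regular) F ->
      F _ (loop_problem mul g) ->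
      forall T : S -> Prop, is_ideal mul T -> rational_subset mul T ->
      F _ (loop_problem (rees_mul mul (T:=T)) (rees_gen T g))).
Proof.
split=> F ratF divF FL T idT.
- case/(finite_ideal_words gen) => K KT finK.
  rewrite (rees_loop_problem_expr idT KT).
  by apply: closed_rees_expr ratF divF FL _ _; apply: finite_lang_image.
- case/(rational_ideal_words gen mulA) => K KT regK.
  rewrite (rees_loop_problem_expr idT KT).
  apply: closed_rees_expr ratF divF FL _ _; first exact: regular_map.
  by rewrite -lang_image_comp; apply/regular_rev/regular_map.
Qed.
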